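(* At the ice point $t=1$, $\Delta=1/2$, let $N\ge1$, $1\le s\le N$, and $r=N-s$. Define $$\mathcal J(z_1,\dots,z_s)=\prod_{j=1}^{s}\frac{z_j^{s-j}}{z_j^{s}(z_j-1)^{s-j+1}}\prod_{1\le j<k\le s}\frac{z_j-z_k}{1- z_k+z_jz_k}\;h_{N,s}(z_1,\dots,z_s).$$ Then the iterated residue at $z=0$ (taken first in $z_s$, ..., finally in $z_1$) is $$\operatorname*{res}_{z_1=0}\cdots\operatorname*{res}_{z_s=0}\mathcal J(z_1,\dots,z_s)=(-1)^s\,h_N(0)\,h_{N-1}(0)\cdots h_{N-s+1}(0).$$
   Context: At the ice point, for $N\ge1$, $h_N(z)={}_2F_1(-N+1,N;2N;1-z)=\sum_{r=1}^N H_N^{(r)}z^{r-1}$, where $H_N^{(r)}=\binom{N+r-2}{N-1}\binom{2N-1-r}{N-1}\big/\binom{3N-2}{N-1}$; it is a polynomial of degree $N-1$ with $h_N(1)=1$ and $z^{N-1}h_N(1/z)=h_N(z)$. For $1\le s\le N$, $$h_{N,s}(z_1,\dots,z_s)=\frac{\det\big[(z_j-1)^{s-i}z_j^{i-1}h_{N-i+1}(z_j)\big]_{i,j=1}^{s}}{\prod_{1\le i<j\le s}(z_i-z_j)}.$$ *)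

From HB Require Import structures.
From mathcomp Require Import all_boot all_order all_algebra.
From mathcomp Require Import fraction.
Set Implicit Arguments. Unset Strict Implicit. Unset Printing Implicit Defensive.
Import Order.TTheory GRing.Theory Num.Theory.
Local Open Scope ring_scope.

(* For f = p/q in K(X) (q <> 0) write q = X^m * q0 with q0(0) <> 0
   (m = multiplicity of the root 0 of q).  Put c = q0(0), g = 1 - q0/c,
   so that u = c^-1 * sum_{k<m} g^k is the inverse of q0 modulo X^m.
   Then f = (p * u mod X^m)/X^m + (holomorphic at 0), and the residue at 0
   (coefficient of X^-1 of the Laurent expansion) is the coefficient of
   X^(m-1) in p*u (and 0 if m = 0). *)
Definition res0_ratio (K : fieldType) (p q : {poly K}) : K :=
  let m := mup 0 q in
  let q0 := q %/ 'X^m in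
  let c := q0.[0] in
  let g := 1 - c^-1 *: q0 in
  let u := c^-1 *: \sum_(k < m) g ^+ k in
  if m is m'.+1 then (p * u)`_m' else 0.

Definition res0 (K : fieldType) (f : {fraction {poly K}}) : K :=
  res0_ratio \n_(repr f) \d_(repr f).

(* RF R n = R(z_1,...,z_n), built as R(z_1)(z_2)...(z_n): the outermost
   indeterminate of RF R n.+1 = RF R n (z_{n+1}) is z_{n+1}. *)
Fixpoint RF (R : fieldType) (n : nat) : fieldType :=
  match n with
  | 0 => R
  | n'.+1 => ({fraction {poly RF R n'}} : fieldType)
  end.

Definition up (R : fieldType) (n : nat) (x : RF R n) : RF R n.+1 :=
  FracField.tofrac (x%:P).

Fixpoint cst (R : fieldType) (n : nat) : R -> RF R n :=
  match n return R -> RF R n with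
  | 0 => fun a => a
  | n'.+1 => fun a => @up R n' (cst n' a)
  end.

(* variable z_{i+1} (0-based index i < n) in RF R n *)
Fixpoint var (R : fieldType) (n : nat) (i : nat) : RF R n :=
  match n return RF R n with
  | 0 => 0
  | n'.+1 => if i == n' then (FracField.tofrac ('X : {poly RF R n'}) : RF R n'.+1)
             else @up R n' (var R n' i)
  end.

(* iterated residue: res_{z_1=0} ... res_{z_n=0}, taken first in z_n *)
Fixpoint iter_res (R : fieldType) (n : nat) : RF R n -> R :=
  match n return RF R n -> R with
  | 0 => fun x => x
  | n'.+1 => fun x => iter_res (@res0 (RF R n') x)
  end.

Definition Hcoef (R : fieldType) (N r : nat) : R :=
  ('C(N + r - 2, N - 1)%:R * 'C(2 * N - 1 - r, N - 1)%:R)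
    / 'C(3 * N - 2, N - 1)%:R.

Definition hN (R : fieldType) (N : nat) : {poly R} :=
  \sum_(r < N) Hcoef R N r.+1 *: 'X^r.

Definition hN_at (R : fieldType) (n N : nat) (z : RF R n) : RF R n :=
  (map_poly (@cst R n) (hN R N)).[z].

Definition hNs (R : fieldType) (N s : nat) : RF R s :=
  \det (\matrix_(i < s, j < s)
          ((var R s j - 1) ^+ (s - 1 - i) * var R s j ^+ i
             * hN_at (N - i) (var R s j)))
  / \prod_(i < s) \prod_(j < s | (i < j)%N) (var R s i - var R s j).

Definition Jfun (R : fieldType) (N s : nat) : RF R s :=
  let z := var R s in
  (\prod_(j < s) (z j ^+ (s - 1 - j) / (z j ^+ s * (z j - 1) ^+ (s - j))))
  * (\prod_(j < s) \prod_(k < s | (j < k)%N)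
        ((z j - z k) / (1 - z k + z j * z k)))
  * hNs R N s.

(** Expanding the determinant in [h_{N,s}] cancels the Vandermonde product,
    so [J] is a signed sum, over permutations [sigma], of products of one factor
    per variable. The factor in [z_{n+1}] coming from row [i] of the determinant
    is [z^(i-n-1)] times a rational function whose denominator is
    [(z-1)^(s-n) prod_{j<=n} (1 + (z_j - 1) z)], a unit at [z = 0] with
    polynomial coefficients in [z_1, ..., z_n]. Taking residues from [z_s] down
    to [z_1], the residue in [z_{n+1}] therefore vanishes when [i > n], equals
    [-h_{N-n}(0)] when [i = n], and is a polynomial in the remaining variables
    otherwise. A permutation other than the identity has some [n] with
    [sigma^-1(n) > n]; by then the integrand is polynomial in [z_{n+1}] times
    that holomorphic factor, so its term contributes nothing, and the identity
    contributes [prod_n (-h_{N-n}(0))]. *)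

From HB Require Import structures.
From mathcomp Require Import all_boot all_order all_algebra.
From mathcomp Require Import fingroup perm generic_quotient fraction ring zify.
Import Order.TTheory GRing.Theory Num.Theory.
Set Implicit Arguments. Unset Strict Implicit. Unset Printing Implicit Defensive.
Local Open Scope ring_scope.

(** * Residues at 0 of univariate rational functions *)

Definition inv_modXn (S : comNzRingType) (c : S) (q : {poly S}) (m : nat) :=
  c *: \sum_(k < m) (1 - c *: q) ^+ k.

Lemma map_inv_modXn (S T : comNzRingType) (phi : {rmorphism S -> T}) c q m :
  map_poly phi (inv_modXn c q m) = inv_modXn (phi c) (map_poly phi q) m.
Proof.
have mapZ a (p : {poly S}) : map_poly phi (a *: p) = phi a *: map_poly phi p.
  by apply/polyP => i; rewrite !(coef_map, coefZ) /= rmorphM.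
rewrite /inv_modXn mapZ rmorph_sum /=; congr (_ *: _).
by apply: eq_bigr => k _; rewrite rmorphXn rmorphB rmorph1 /= mapZ.
Qed.

Lemma horner0_map (S T : nzRingType) (phi : {rmorphism S -> T}) p :
  (map_poly phi p).[0] = phi p.[0].
Proof. by rewrite !horner_coef0 coef_map. Qed.

Section Residue.
Variable K : fieldType.
Local Notation tf := (@FracField.tofrac {poly K}).
Implicit Types p q r v : {poly K}.

Lemma dvdX_horner0 p : ('X %| p) = (p.[0] == 0).
Proof. by rewrite -[X in X %| _]subr0 -polyC0 dvdp_XsubCl. Qed.

Lemma mup0_XnM m q : q.[0] != 0 -> mup 0 ('X^m * q) = m.
Proof.
move=> q0; rewrite mupMl; last by rewrite /root.
by rewrite -[X in mup _ (X ^+ _)]subr0 -polyC0 mup_XsubCX eqxx.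
Qed.

Lemma XnM_decomp q : q != 0 -> exists m q0, q0.[0] != 0 /\ q = 'X^m * q0.
Proof.
move=> qN0; have [m [q0 q0N0 ->]] := multiplicity_XsubC q 0.
by exists m, q0; rewrite qN0 /root in q0N0; rewrite polyC0 subr0 mulrC.
Qed.

Lemma inv_modXnP c q m : c * q.[0] = 1 -> 'X^m %| inv_modXn c q m * q - 1.
Proof.
move=> cq; set g := 1 - c *: q.
have -> : inv_modXn c q m * q - 1 = - g ^+ m.
  rewrite /inv_modXn -/g -scalerAl scalerAr mulrC.
  have -> : c *: q = - (g - 1) by rewrite /g opprB opprB addrC subrK.
  by rewrite mulNr -subrX1 opprB addrAC subrr add0r.
by rewrite dvdpNr dvdp_exp2r // dvdX_horner0 /g !hornerE cq subrr.
Qed.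

Lemma res0_ratio_XnM p q v m : q.[0] != 0 -> 'X^m %| v * q - 1 ->
  res0_ratio p ('X^m * q) = if m is m'.+1 then (p * v)`_m' else 0.
Proof.
move=> q0 hv; rewrite /res0_ratio mup0_XnM // mulKp ?monic_neq0 ?monicXn //.
case: m hv => [//|m] hv; set u := _ *: _.
have hu : 'X^(m.+1) %| u * q - 1 := inv_modXnP m.+1 (mulVf q0).
have copXq : coprimep 'X^(m.+1) q.
  by rewrite coprimep_expl // coprimep_sym -[X in coprimep _ X]subr0 -polyC0
    coprimep_XsubC.
have : 'X^(m.+1) %| (u - v) * q.
  have -> : (u - v) * q = (u * q - 1) - (v * q - 1).
    by rewrite mulrBl opprB addrA subrK.
  exact: dvdp_sub.
rewrite Gauss_dvdpl // => /dvdpP [w Ew]; apply/eqP.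
by rewrite -subr_eq0 -coefB -mulrBr Ew mulrA coefMXn ltnSn.
Qed.

Lemma res0_ratioM2r p q r : q != 0 -> r != 0 ->
  res0_ratio (p * r) (q * r) = res0_ratio p q.
Proof.
move=> /XnM_decomp [m [q0 [q00 ->]]] /XnM_decomp [k [r0 [r00 ->]]].
have qr0 : (q0 * r0).[0] != 0 by rewrite hornerM mulf_neq0.
have hu := inv_modXnP (m + k) (mulVf qr0); set u := inv_modXn _ _ _ in hu.
have hu' : 'X^m %| r0 * u * q0 - 1.
  apply: dvdp_trans (dvdp_exp2l _ (leq_addr k m)) _.
  by rewrite mulrAC mulrC [r0 * q0]mulrC.
rewrite (_ : 'X^m * q0 * ('X^k * r0) = 'X^(m + k) * (q0 * r0)); last first.
  by rewrite exprD; ring.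
rewrite (res0_ratio_XnM _ qr0 hu) (res0_ratio_XnM _ q00 hu').
have -> : p * ('X^k * r0) * u = 'X^k * (p * (r0 * u)) by ring.
clearbody u; case: m {hu hu'} => [|m].
  by rewrite add0n; case: k => [//|k]; rewrite coefXnM ltnSn.
by rewrite addSn coefXnM ltnNge leq_addl addnK.
Qed.

Lemma frac_repr (f : {fraction {poly K}}) :
  f = tf \n_(repr f) / tf \d_(repr f).
Proof.
rewrite -[f in LHS]reprK; unlock FracField.tofrac; rewrite !piE.
apply/eqmodP; rewrite /= /FracField.mulf /FracField.invf.
rewrite !numden_Ratio ?oner_neq0 ?denom_ratioP // mulr1 mul1r Ratio_numden.
exact: FracField.equivf_refl.
Qed.

Lemma res0_tofrac p q : q != 0 -> res0 (tf p / tf q) = res0_ratio p q.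
Proof.
move=> qN0; rewrite /res0; set f := tf p / tf q.
set n := \n_(repr f); set d := \d_(repr f).
have dN0 : d != 0 := denom_ratioP _.
have en : tf n = f * tf d by rewrite [X in X * _]frac_repr -/n -/d divfK ?tofrac_eq0.
have : tf (n * q) = tf (d * p).
  by rewrite !tofracM en /f mulrAC divfK ?tofrac_eq0 // mulrC.
move/eqP; rewrite tofrac_eq => /eqP E.
by rewrite -(res0_ratioM2r n dN0 qN0) E [d * p]mulrC [d * q]mulrC res0_ratioM2r.
Qed.

Lemma frac_tofrac (f : {fraction {poly K}}) :
  exists p q, q != 0 /\ f = tf p / tf q.
Proof. by exists \n_(repr f), \d_(repr f); rewrite denom_ratioP -frac_repr. Qed.

Lemma res0D (f g : {fraction {poly K}}) : res0 (f + g) = res0 f + res0 g.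
Proof.
have [p1 [q1 [q1N0 ->]]] := frac_tofrac f.
have [p2 [q2 [q2N0 ->]]] := frac_tofrac g.
rewrite addf_div ?tofrac_eq0 // -!tofracM -tofracD !res0_tofrac ?mulf_neq0 //.
rewrite -(res0_ratioM2r p1 q1N0 q2N0) -(res0_ratioM2r p2 q2N0 q1N0) [q2 * q1]mulrC.
by rewrite /res0_ratio; case: (mup 0 _) => [|m]; rewrite ?addr0 // mulrDl coefD.
Qed.

Lemma res0ZC c (f : {fraction {poly K}}) : res0 (tf c%:P * f) = c * res0 f.
Proof.
have [p [q [qN0 ->]]] := frac_tofrac f.
rewrite mulrA -tofracM !res0_tofrac // /res0_ratio.
by case: (mup 0 q) => [|m]; rewrite ?mulr0 // -mulrA coefCM.
Qed.

Lemma res0_is_nmod_morphism : nmod_morphism (@res0 K).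
Proof.
split; last exact: res0D.
by have := res0ZC 0 0; rewrite polyC0 tofrac0 !mul0r.
Qed.
HB.instance Definition _ := GRing.isNmodMorphism.Build {fraction {poly K}} K
  (@res0 K) res0_is_nmod_morphism.

Lemma res0_XnM_holomorphic p q k m : (m <= k)%N -> q.[0] != 0 ->
  res0 (tf ('X^k * p) / tf ('X^m * q)) = 0.
Proof.
move=> mk q0; have qN0 : q != 0 by apply: contraNneq q0 => ->; rewrite horner0.
rewrite res0_tofrac ?mulf_neq0 ?expf_neq0 ?polyX_eq0 //.
rewrite -(subnK mk) exprD mulrAC [_ * q]mulrC res0_ratioM2r ?expf_neq0 ?polyX_eq0 //.
by rewrite -[q]mul1r -(expr0 'X) (@res0_ratio_XnM _ _ 0) ?dvd1p.
Qed.

Lemma res0_XnM_simple_pole p q k : q.[0] != 0 ->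
  res0 (tf ('X^k * p) / tf ('X^(k.+1) * q)) = p.[0] / q.[0].
Proof.
move=> q0; have qN0 : q != 0 by apply: contraNneq q0 => ->; rewrite horner0.
rewrite res0_tofrac ?mulf_neq0 ?expf_neq0 ?polyX_eq0 //.
rewrite exprSr -mulrA mulrC [_ * (_ * q)]mulrC.
rewrite res0_ratioM2r ?mulf_neq0 ?expf_neq0 ?polyX_eq0 //.
rewrite -(expr1 'X) (@res0_ratio_XnM _ _ (q.[0]^-1)%:P) //; last first.
  by rewrite expr1 dvdX_horner0 !hornerE mulVf ?subrr.
by rewrite mulrC coefCM -horner_coef0 mulrC.
Qed.

Lemma res0_map_ratio (S : comNzRingType) (phi : {rmorphism S -> K}) a b c m :
  c * b.[0] = 1 ->
  exists x, res0 (tf (map_poly phi a) / tf ('X^m * map_poly phi b)) = phi x.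
Proof.
move=> cb; have b0 : phi c * (map_poly phi b).[0] = 1.
  by rewrite horner0_map -rmorphM cb rmorph1.
have bN0 : (map_poly phi b).[0] != 0.
  by apply: contra_eq_neq b0 => ->; rewrite mulr0 eq_sym oner_neq0.
have bpN0 : map_poly phi b != 0 by apply: contraNneq bN0 => ->; rewrite horner0.
have hv := inv_modXnP m b0; rewrite -map_inv_modXn in hv.
rewrite res0_tofrac ?mulf_neq0 ?expf_neq0 ?polyX_eq0 //.
case: m hv => [|m] hv; [exists 0 | exists (a * inv_modXn c b m.+1)`_m];
  apply: etrans (res0_ratio_XnM _ bN0 hv) _; by rewrite ?rmorph0 // -rmorphM coef_map.
Qed.
End Residue.

(** * Nested polynomial rings *)

Section NestedPolynomials.
Variable R : fieldType.

(* [NPoly n] is R[z_1, ..., z_n] and [embRF n] its inclusion into R(z_1, ..., z_n).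
   Residues of the integrand stay in its image, which is what keeps each later
   factor holomorphic in its own variable. *)

Fixpoint NPoly (n : nat) : idomainType :=
  if n is n'.+1 then ({poly NPoly n'} : idomainType) else R.

Fixpoint embRF (n : nat) : {rmorphism NPoly n -> RF R n} :=
  match n with
  | 0 => idfun
  | n'.+1 => (@FracField.tofrac {poly RF R n'} \o map_poly (embRF n'))%FUN
  end.

Fixpoint npoly_cst (n : nat) : {rmorphism R -> NPoly n} :=
  match n with
  | 0 => idfun
  | n'.+1 => (polyC \o npoly_cst n')%FUN
  end.

Fixpoint npoly_var (n i : nat) : NPoly n :=
  if n is n'.+1 then (if i == n' then 'X else (npoly_var n' i)%:P) else 0.

HB.instance Definition _ n :=
  GRing.RMorphism.copy (@up R n) (@FracField.tofrac {poly RF R n} \o polyC)%FUN.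

Lemma embRF_polyC n (p : NPoly n) : embRF n.+1 p%:P = up (embRF n p).
Proof. by rewrite /= map_polyC. Qed.

Lemma embRF_cst n c : embRF n (npoly_cst n c) = cst n c.
Proof. by elim: n => [//|n IH]; rewrite [LHS]embRF_polyC IH. Qed.

Lemma embRF_var n i : embRF n (npoly_var n i) = var R n i.
Proof.
elim: n => [//|n IH]; rewrite [npoly_var _ _]/= [var _ _ _]/=.
case: (i == n); last by rewrite -IH; apply: embRF_polyC.
by congr FracField.tofrac; apply: map_polyX.
Qed.

Lemma res0_up n (x : RF R n) (y : RF R n.+1) : res0 (up x * y) = x * res0 y.
Proof. exact: res0ZC. Qed.

Lemma iter_res_is_nmod_morphism n : nmod_morphism (@iter_res R n).
Proof.
elim: n => [//|n [IH0 IHD]]; split=> [|x y] /=; first by rewrite raddf0.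
by rewrite raddfD IHD.
Qed.
HB.instance Definition _ n := GRing.isNmodMorphism.Build (RF R n) R
  (@iter_res R n) (@iter_res_is_nmod_morphism n).

Lemma iter_res_sum n (I : Type) (r : seq I) (P : pred I) (F : I -> RF R n) :
  iter_res (\sum_(i <- r | P i) F i) = \sum_(i <- r | P i) iter_res (F i).
Proof. exact: raddf_sum. Qed.

Lemma iter_resMcst n (x : RF R n) c : iter_res (x * cst n c) = iter_res x * c.
Proof. by elim: n x => [//|n IH] x /=; rewrite mulrC res0ZC mulrC IH. Qed.

Lemma iter_resMsign n (x : RF R n) (b : bool) :
  iter_res ((-1) ^+ b * x) = (-1) ^+ b * iter_res x.
Proof. by rewrite !mulr_sign; case: b; rewrite ?raddfN. Qed.
End NestedPolynomials.

(** * The factors of the integrand *)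

Section Integrand.
Variables (R : fieldType) (N s : nat).
Local Notation tf := (@FracField.tofrac {poly _}).
Local Notation embRF := (embRF R).

Definition weight (F : fieldType) (j : nat) (z : F) :=
  z ^+ (s - 1 - j) / (z ^+ s * (z - 1) ^+ (s - j)).
Definition entry n (i : nat) (z : RF R n) :=
  (z - 1) ^+ (s - 1 - i) * z ^+ i * hN_at (N - i) z.
Definition cross (F : fieldType) (x y : F) := (1 - y + x * y)^-1.

Definition ztop n : RF R n.+1 := FracField.tofrac ('X : {poly RF R n}).

Lemma embRF_X n : embRF n.+1 'X = ztop n.
Proof. by congr FracField.tofrac; apply: map_polyX. Qed.

(* Everything in the summand of [J] for a permutation that depends on the last
   variable [z_{n+1}]: its weight, the determinant entry of row [i] in its column,
   and the cross terms with [z_1, ..., z_n]. *)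
Definition factor n i : RF R n.+1 :=
  weight n (ztop n) * entry i (ztop n)
  * \prod_(j < n) cross (up (var R n j)) (ztop n).

Fixpoint term n (f : nat -> nat) : RF R n :=
  if n is n'.+1 then up (term n' f) * factor n' (f n') else 1.

Definition fnum n i : {poly NPoly R n} :=
  ('X - 1) ^+ (s - 1 - i) * map_poly (npoly_cst R n) (hN R (N - i)).
Definition fden n : {poly NPoly R n} :=
  ('X - 1) ^+ (s - n) * \prod_(j < n) (1 + (npoly_var R n j - 1)%:P * 'X).

Lemma hN_at_embRF n M (x : NPoly R n) :
  hN_at M (embRF n x) = embRF n (map_poly (npoly_cst R n) (hN R M)).[x].
Proof.
rewrite /hN_at -horner_map; congr (_.[_]).
by rewrite -map_poly_comp; apply: eq_map_poly => c; rewrite /= embRF_cst.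
Qed.

Lemma factor_ratio n i :
  factor n i =
  embRF n.+1 ('X^(s - 1 - n + i) * fnum n i) / embRF n.+1 ('X^s * fden n).
Proof.
have hh : hN_at (N - i) (ztop n)
    = embRF n.+1 (map_poly (npoly_cst R n) (hN R (N - i))).
  rewrite -embRF_X hN_at_embRF /= map_poly_comp.
  by congr (_ (map_poly _ _)); apply: comp_polyXr.
rewrite /factor /weight /entry /cross hh /fnum /fden prodfV.
under eq_bigr => j _ do rewrite -embRF_var -embRF_polyC.
rewrite -embRF_X !(rmorphM, rmorphXn, rmorphB, rmorph1, rmorph_prod).
set Z := embRF n.+1 'X.
have -> : \prod_(j < n) (1 - Z + embRF n.+1 (npoly_var R n j)%:P * Z)
    = \prod_(j < n) embRF n.+1 (1 + (npoly_var R n j - 1)%:P * 'X).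
  by apply: eq_bigr => j _; rewrite rmorphD rmorphM rmorphB !rmorph1; ring.
by rewrite exprD !invfM; ring.
Qed.

Lemma fden0 n : (fden n).[0] = (-1) ^+ (s - n).
Proof.
rewrite /fden hornerM horner_exp horner_prod !hornerE.
by rewrite big1 ?mulr1 // => j _; rewrite !hornerE.
Qed.

Lemma fnum0 n : (n < s)%N ->
  (fnum n n).[0] = - (fden n).[0] * npoly_cst R n (hN R (N - n)).[0].
Proof.
move=> ns; rewrite fden0 /fnum hornerM horner_exp !horner_coef0 coef_map /=.
rewrite coefB coefX coefC /= sub0r (_ : s - n = (s - 1 - n).+1)%N; last by lia.
by rewrite exprS mulN1r opprK.
Qed.

Lemma embRF_XnM n k (p : {poly NPoly R n}) :
  embRF n.+1 ('X^k * p) = tf ('X^k * map_poly (embRF n) p).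
Proof. by rewrite [LHS]/= rmorphM /= map_polyXn. Qed.

Lemma factorM_embRF n i g : factor n i * embRF n.+1 g =
  tf ('X^(s - 1 - n + i) * map_poly (embRF n) (fnum n i * g))
  / tf ('X^s * map_poly (embRF n) (fden n)).
Proof. by rewrite factor_ratio mulrAC -rmorphM -mulrA !embRF_XnM. Qed.

Lemma map_fden0_neq0 n : (map_poly (embRF n) (fden n)).[0] != 0.
Proof. by rewrite horner0_map fden0 rmorph_sign signr_eq0. Qed.

Lemma res0_factor_holomorphic n i g : (n < i)%N ->
  res0 (factor n i * embRF n.+1 g) = 0.
Proof.
by move=> ni; rewrite factorM_embRF res0_XnM_holomorphic ?map_fden0_neq0 //; lia.
Qed.

Lemma res0_factor_simple_pole n : (n < s)%N ->
  res0 (factor n n) = cst n (- (hN R (N - n)).[0]).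
Proof.
move=> ns; rewrite -[factor n n]mulr1 -(rmorph1 (embRF n.+1)) factorM_embRF mulr1.
rewrite (_ : s - 1 - n + n = s.-1)%N; last by lia.
have -> : 'X^s = 'X^(s.-1.+1) :> {poly RF R n} by rewrite prednK //; lia.
rewrite res0_XnM_simple_pole ?map_fden0_neq0 // !horner0_map fnum0 //.
have dN0 : embRF n (fden n).[0] != 0 by rewrite fden0 rmorph_sign signr_eq0.
by rewrite -embRF_cst rmorphM !rmorphN !mulNr mulrAC divff // mul1r.
Qed.

Lemma res0_factor_embRF n i g :
  exists g', res0 (factor n i * embRF n.+1 g) = embRF n g'.
Proof.
rewrite factorM_embRF -(map_polyXn (embRF n)) -rmorphM.
apply: (@res0_map_ratio _ _ _ _ _ ((-1) ^+ (s - n))).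
by rewrite fden0 -expr2 sqrr_sign.
Qed.

Lemma iter_res_term_id n f : (n <= s)%N -> (forall j, (j < n)%N -> f j = j) ->
  iter_res (term n f) = \prod_(j < n) - (hN R (N - j)).[0].
Proof.
elim: n => [|n IH] ns fid; first by rewrite big_ord0.
rewrite /= res0_up fid // res0_factor_simple_pole // iter_resMcst big_ord_recr.
by rewrite IH ?(ltnW ns) // => j jn; apply/fid/ltnW.
Qed.

Lemma iter_res_term_vanish n f j0 (g : NPoly R n) : (j0 < n)%N -> (j0 < f j0)%N ->
  iter_res (term n f * embRF n g) = 0.
Proof.
elim: n g => [//|n IH] g jn jf; rewrite /= -mulrA res0_up.
have [ej | jN] := eqVneq j0 n.
  by rewrite res0_factor_holomorphic ?mulr0 ?raddf0 // -ej.
have [g' ->] := res0_factor_embRF (f n) g.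
by apply: IH jf; rewrite ltn_neqAle jN -ltnS.
Qed.

Definition diag_part n (f : nat -> nat) : RF R n :=
  \prod_(j < n) (weight j (var R n j) * entry (f j) (var R n j)).
Definition cross_part n : RF R n :=
  \prod_(j < n) \prod_(k < n | (j < k)%N) cross (var R n j) (var R n k).

Lemma var_last n : var R n.+1 n = ztop n.
Proof. by rewrite /= eqxx. Qed.

Lemma var_lift n (j : 'I_n) : var R n.+1 j = up (var R n j).
Proof. by rewrite /= ltn_eqF. Qed.

Lemma up_weight n j (z : RF R n) : up (weight j z) = weight j (up z).
Proof. by rewrite /weight !(rmorphM, rmorphXn, fmorphV, rmorphB, rmorph1). Qed.

Lemma up_cross n (x y : RF R n) : up (cross x y) = cross (up x) (up y).
Proof. by rewrite /cross !(fmorphV, rmorphM, rmorphD, rmorphN, rmorph1). Qed.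

Lemma up_entry n i (z : RF R n) : up (entry i z) = entry i (up z).
Proof.
rewrite /entry /hN_at !(rmorphM, rmorphXn, rmorphB, rmorph1) -horner_map.
by rewrite -map_poly_comp.
Qed.

Lemma diag_part_recr n f :
  diag_part n.+1 f = up (diag_part n f) * (weight n (ztop n) * entry (f n) (ztop n)).
Proof.
rewrite /diag_part big_ord_recr var_last rmorph_prod; congr (_ * _).
by apply: eq_bigr => j _; rewrite var_lift rmorphM /= up_weight up_entry.
Qed.

Lemma cross_part_recr n :
  cross_part n.+1 = up (cross_part n) * \prod_(j < n) cross (up (var R n j)) (ztop n).
Proof.
rewrite /cross_part big_ord_recr [X in _ * X = _]big1 => [|k]; last first.
  by rewrite ltnNge -ltnS ltn_ord.
rewrite mulr1 rmorph_prod -big_split; apply: eq_bigr => j _.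
rewrite big_mkcond big_ord_recr /= ltn_ord -big_mkcond /= eqxx (ltn_eqF (ltn_ord j)).
rewrite rmorph_prod /=; congr (_ * _); apply: eq_bigr => k _.
by rewrite up_cross (ltn_eqF (ltn_ord k)).
Qed.

Lemma term_prod n f : term n f = diag_part n f * cross_part n.
Proof.
elim: n => [|n IH]; first by rewrite /diag_part /cross_part !big_ord0 mulr1.
by rewrite /= IH diag_part_recr cross_part_recr rmorphM /factor; ring.
Qed.
End Integrand.

(** * Expansion of the determinant *)

Lemma var_neq (R : fieldType) n i j : (i < j < n)%N -> var R n i != var R n j.
Proof.
elim: n i j => [|n IH] i j /andP [ij jn]; first by [].
have [<- {IH jn} | jN] := eqVneq j n.
  rewrite /= eqxx (ltn_eqF ij) tofrac_eq.
  apply/eqP => /(f_equal (fun p : {poly _} => size p)).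
  by rewrite size_polyX size_polyC; case: (_ != 0).
have jn' : (j < n)%N by rewrite ltn_neqAle jN -ltnS.
rewrite /= (ltn_eqF jn') (ltn_eqF (ltn_trans ij jn')) tofrac_eq (inj_eq polyC_inj).
by apply: IH; rewrite ij.
Qed.

Lemma perm_lt_witness n (t : 'S_n) : t != 1%g -> exists j : 'I_n, (j < t j)%N.
Proof.
move=> t1; apply/existsP; apply: contraR t1 => /existsPn tle.
have le_t j : (t j <= j ?= iff (nat_of_ord (t j) == j))%N.
  by apply/leqif_eq; rewrite leqNgt tle.
have [_] := leqif_sum (fun j (_ : predT j) => le_t j).
rewrite [X in _ == X](reindex_inj (@perm_inj _ t)) eqxx.
move=> /esym/forallP tid; apply/eqP/permP => j; apply/val_inj/eqP.
by rewrite perm1; apply: tid.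
Qed.

Lemma Jfun_expansion (R : fieldType) (N s : nat) :
  Jfun R N s.+1 =
  \sum_(t : 'S_s.+1) (-1) ^+ t * term R N s.+1 s.+1 (fun j => (t^-1)%g (inord j)).
Proof.
rewrite /Jfun /hNs; set z := var R s.+1.
set V := \prod_(i < s.+1) \prod_(j < s.+1 | (i < j)%N) (z i - z j).
have VN0 : V != 0.
  apply/prodf_neq0 => i _; apply/prodf_neq0 => j ij.
  by rewrite subr_eq0 var_neq // ij /=.
have -> : \prod_(j < s.+1) \prod_(k < s.+1 | (j < k)%N)
            ((z j - z k) / (1 - z k + z j * z k))
    = V * cross_part R s.+1.
  by rewrite /V /cross_part -big_split; apply: eq_bigr => j _; rewrite -big_split.
have cancelV (a b c d : RF R s.+1) : c != 0 -> a * (c * b) * (d / c) = a * b * d.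
  by move=> cN0; rewrite [c * _]mulrC [a * _]mulrA mulrACA mulfV // mulr1.
rewrite cancelV // /determinant mulr_sumr.
apply: eq_bigr => t _; rewrite term_prod /diag_part [in RHS]big_split.
rewrite mulrCA; congr (_ * _); rewrite mulrAC; congr (_ * _ * _).
rewrite (reindex_inj (@perm_inj _ (t^-1)%g)) /=.
by apply: eq_bigr => j _; rewrite mxE permKV inord_val.
Qed.

Theorem lemma2 (R : numFieldType) (N s : nat) :
  (1 <= N)%N -> (1 <= s)%N -> (s <= N)%N ->
  iter_res (Jfun R N s) = (-1) ^+ s * \prod_(i < s) (hN R (N - i)).[0].
Proof.
case: s => [//|s] _ _ _.
rewrite Jfun_expansion iter_res_sum (bigD1 1%g) // big1 => [|t t1].
  rewrite odd_perm1 mul1r iter_res_term_id // => [|j js]; last first.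
    by rewrite invg1 perm1 inordK.
  by rewrite prodrN card_ord /= addr0.
have [j jt] : exists j : 'I_s.+1, (j < (t^-1)%g j)%N.
  by apply: perm_lt_witness; rewrite eq_invg1.
rewrite iter_resMsign -[term _ _ _ _ _]mulr1 -(rmorph1 (embRF R s.+1)).
by rewrite (@iter_res_term_vanish R N s.+1 s.+1 _ j) ?mulr0 ?inord_val.
Qed.
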